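(* Assume the contextual smoothness condition with parameters $\delta>0$, $\mu\in(0,1)$, and let $\gamma=\delta(1-\mu)^{-1}$. For any strategies $w^j_t\in\Delta_K$ ($j\in[J]$, $t\in[T]$) played in the game protocol, with $\mathbf w_t=w^1_t\otimes\dots\otimes w^J_t$, $$\frac1T\sum_{t=1}^TC_t(\mathbf w_t)\le\gamma C^\star+\frac{1}{(1-\mu)T}\sum_{j=1}^J\mathrm{Reg}^j_T .$$
   Context: Setting. There are $J\ge1$ agents indexed by $j\in[J]$. Agent $j$ has a finite action set $\mathcal A^j=\{a^j_1,\dots,a^j_K\}$ with $K$ elements; $\mathcal A=\mathcal A^1\times\dots\times\mathcal A^J$, $\mathcal A^{-j}=\prod_{i\ne j}\mathcal A^i$, $\mathbf a=(a^j,\mathbf a^{-j})$. $\Delta_K$ is the probability simplex in $\mathbb R^K$, and $w\in\Delta_K$ is identified with the distribution on $\mathcal A^j$ putting mass $w[k]$ on $a^j_k$. The context set $\mathcal Z=\{z_1,\dots,z_m\}\subset\mathbb R^d$ is finite. Agent $j$ has $\phi^j:\mathcal A\to\mathbb R^d$ and cost $c^j(\mathbf w,Z)=\mathbb E_{\mathbf a\sim\mathbf w}[\langle\phi^j(\mathbf a),Z\rangle]$ (for a pure profile $\mathbf a$, $c^j(\mathbf a,Z)=\langle\phi^j(\mathbf a),Z\rangle$); for $w\in\Delta_K$ write $c^j(w,\mathbf w^{-j},Z)=c^j(w\otimes\mathbf w^{-j},Z)$. Standing assumption (bounded costs): $|\langle Z,\phi^j(\mathbf a)\rangle|\le1$.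 Game protocol: $T$ rounds, fixed sequence $Z_1,\dots,Z_T\in\mathcal Z$; at round $t$ each agent $j$ plays $w^j_t\in\Delta_K$ and incurs $c^j(w^j_t,\mathbf w^{-j}_t,Z_t)$ with $\mathbf w^{-j}_t=\bigotimes_{i\ne j}w^i_t$. Contextual external regret: $\mathrm{Reg}^j_T=\sum_{t=1}^Tc^j(w^j_t,\mathbf w^{-j}_t,Z_t)-\min_{\pi:\mathcal Z\to\Delta_K}\sum_{t=1}^Tc^j(\pi(Z_t),\mathbf w^{-j}_t,Z_t)$. Social cost: $C_t(\mathbf w)=\sum_{j=1}^Jc^j(\mathbf w,Z_t)$, and $C^\star=\min_{\boldsymbol\rho:\mathcal Z\to\mathcal A}T^{-1}\sum_{t=1}^T\sum_{j=1}^Jc^j(\boldsymbol\rho(Z_t),Z_t)$. Contextual smoothness condition with parameters $(\delta,\mu)$: for all $\mathbf a,\mathbf a_\star\in\mathcal A$ and $z\in\mathcal Z$, $\sum_{j}\langle z,\phi^j(a^j_\star,\mathbf a^{-j})\rangle\le\sum_j[\delta\langle z,\phi^j(\mathbf a_\star)\rangle+\mu\langle z,\phi^j(\mathbf a)\rangle]$. *)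

From HB Require Import structures.
From mathcomp Require Import all_boot all_order all_algebra.
From mathcomp Require Import classical_sets reals.
Set Implicit Arguments. Unset Strict Implicit. Unset Printing Implicit Defensive.
Import Order.TTheory GRing.Theory Num.Theory.
Local Open Scope ring_scope.
Local Open Scope classical_set_scope.

Section Game.
Variables (R : realType) (J K d : nat).

Definition profile := {ffun 'I_J -> 'I_K}.

Definition dotp (u v : 'rV[R]_d) : R := \sum_(i < d) u ord0 i * v ord0 i.

Definition in_simplex (w : 'I_K -> R) : Prop :=
  (forall k, 0 <= w k) /\ \sum_(k < K) w k = 1.

Definition upd_pure (a : profile) (j : 'I_J) (k : 'I_K) : profile :=
  [ffun i => if i == j then k else a i].

Definition upd_mixed (w : 'I_J -> 'I_K -> R) (j : 'I_J) (v : 'I_K -> R)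
  : 'I_J -> 'I_K -> R := fun i => if i == j then v else w i.

Definition exp_cost (phi : 'I_J -> profile -> 'rV[R]_d) (j : 'I_J)
  (w : 'I_J -> 'I_K -> R) (z : 'rV[R]_d) : R :=
  \sum_(a : profile) (\prod_(i < J) w i (a i)) * dotp (phi j a) z.

(* Contexts: Z = {zv c | c : 'I_m} (zv injective); Z_t = zv (zt t). *)
Definition contextual_regret (m T : nat) (zv : 'I_m -> 'rV[R]_d)
  (zt : 'I_T -> 'I_m) (phi : 'I_J -> profile -> 'rV[R]_d)
  (w : 'I_T -> 'I_J -> 'I_K -> R) (j : 'I_J) : R :=
  \sum_(t < T) exp_cost phi j (w t) (zv (zt t))
  - inf [set x : R | exists pi : 'I_m -> 'I_K -> R,
           (forall c, in_simplex (pi c)) /\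
           x = \sum_(t < T) exp_cost phi j (upd_mixed (w t) j (pi (zt t))) (zv (zt t))].

Definition social_cost (phi : 'I_J -> profile -> 'rV[R]_d)
  (w : 'I_J -> 'I_K -> R) (z : 'rV[R]_d) : R :=
  \sum_(j < J) exp_cost phi j w z.

Definition opt_cost (m T : nat) (zv : 'I_m -> 'rV[R]_d) (zt : 'I_T -> 'I_m)
  (phi : 'I_J -> profile -> 'rV[R]_d) : R :=
  inf [set x : R | exists rho : 'I_m -> profile,
         x = T%:R^-1 * \sum_(t < T) \sum_(j < J) dotp (phi j (rho (zt t))) (zv (zt t))].

Definition ctx_smooth (m : nat) (zv : 'I_m -> 'rV[R]_d)
  (phi : 'I_J -> profile -> 'rV[R]_d) (delta mu : R) : Prop :=
  forall (a astar : profile) (c : 'I_m),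
    \sum_(j < J) dotp (phi j (upd_pure a j (astar j))) (zv c)
    <= \sum_(j < J) (delta * dotp (phi j astar) (zv c) + mu * dotp (phi j a) (zv c)).

End Game.

(* Fix a benchmark policy rho : Z -> A and let every agent j deviate, at round t, to the pure
   action (rho Z_t)_j.  Since the opponents' strategies are independent, the expected cost of
   this deviation is the expectation over a ~ w_t of the cost of (rho(Z_t)_j, a^{-j}); summing
   over j and applying smoothness pointwise bounds the total deviation cost at round t by
   delta * C(rho Z_t) + mu * C_t(w_t).  Each agent's regret is at least its realized cost
   minus its deviation cost, so (1 - mu) sum_t C_t(w_t) - sum_j Reg^j_T <= delta * T * C(rho);
   taking the infimum over rho and dividing by (1 - mu) T gives the bound. *)
From HB Require Import structures.
From mathcomp Require Import all_boot all_order all_algebra.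
From mathcomp Require Import classical_sets reals.
From mathcomp Require Import ring lra.
Import Order.TTheory GRing.Theory Num.Theory.
Local Open Scope ring_scope.

Set Implicit Arguments.
Unset Strict Implicit.

Section ProductDistribution.
Variables (R : realType) (J K : nat).
Implicit Types (w : 'I_J -> 'I_K -> R) (a b : profile J K) (j : 'I_J) (k : 'I_K).

Definition prodw w a : R := \prod_i w i (a i).

Definition dirac k : 'I_K -> R := fun k' => (k' == k)%:R.

Lemma in_simplex_dirac k : in_simplex (dirac k).
Proof.
split=> [k'|]; first by rewrite ler0n.
by rewrite (bigD1 k) //= /dirac eqxx big1 ?addr0 // => k' /negbTE ->.
Qed.

Lemma in_simplex_upd_mixed w j v :
  (forall i, in_simplex (w i)) -> in_simplex v ->
  forall i, in_simplex (upd_mixed w j v i).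
Proof. by move=> hw hv i; rewrite /upd_mixed; case: (i == j). Qed.

Lemma in_simplex_gt0 (v : 'I_K -> R) : in_simplex v -> (0 < K)%N.
Proof.
case=> _; case: K v => // v; rewrite big_ord0 => /eqP.
by rewrite eq_sym oner_eq0.
Qed.

Lemma prodw_ge0 w a : (forall i, in_simplex (w i)) -> 0 <= prodw w a.
Proof. by move=> hw; apply: prodr_ge0 => i _; case: (hw i). Qed.

Lemma sum_prodw w : (forall i, in_simplex (w i)) -> \sum_a prodw w a = 1.
Proof.
move=> hw; rewrite -(bigA_distr_bigA (fun i k => w i k)).
by apply: big1 => i _; case: (hw i).
Qed.

Lemma sum_prodw_ge w (f : profile J K -> R) (lb : R) :
  (forall i, in_simplex (w i)) -> (forall a, lb <= f a) ->
  lb <= \sum_a prodw w a * f a.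
Proof.
move=> hw hf; rewrite -[lb]mul1r -(sum_prodw hw) big_distrl /=.
by apply: ler_sum => a _; rewrite ler_wpM2l ?prodw_ge0.
Qed.

Lemma upd_pure_eq a j k : upd_pure a j k j = k.
Proof. by rewrite /upd_pure ffunE eqxx. Qed.

Lemma upd_pureK a j k k' : upd_pure (upd_pure a j k) j k' = upd_pure a j k'.
Proof. by apply/ffunP => i; rewrite !ffunE; case: (i == j). Qed.

Lemma upd_pure_id a j : upd_pure a j (a j) = a.
Proof. by apply/ffunP => i; rewrite !ffunE; case: eqP => // ->. Qed.

Lemma prod_neq_upd_pure w a j k :
  \prod_(i | i != j) w i (upd_pure a j k i) = \prod_(i | i != j) w i (a i).
Proof. by apply: eq_bigr => i /negbTE hi; rewrite /upd_pure ffunE hi. Qed.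

Lemma prodw_upd_dirac w a j k :
  prodw (upd_mixed w j (dirac k)) a = (a j == k)%:R * \prod_(i | i != j) w i (a i).
Proof.
rewrite /prodw (bigD1 j) //= /upd_mixed eqxx; congr (_ * _).
by apply: eq_bigr => i /negbTE ->.
Qed.

Lemma upd_pure_fixed a j k : (upd_pure a j k == a) = (a j == k).
Proof.
apply/eqP/eqP => [<-|<-]; [exact: upd_pure_eq | exact: upd_pure_id].
Qed.

Lemma sum_fiber_upd_pure (F : profile J K -> R) j k k' :
  \sum_(a : profile J K | a j == k') F (upd_pure a j k) = \sum_(b : profile J K | b j == k) F b.
Proof.
rewrite (reindex_onto (fun b : profile J K => upd_pure b j k') (fun b => upd_pure b j k)).
  apply: eq_big => b; rewrite upd_pureK upd_pure_eq eqxx upd_pure_fixed //.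
  by move/eqP=> bk; rewrite -bk upd_pure_id.
by move=> b /eqP <-; rewrite upd_pureK upd_pure_id.
Qed.

(* Independence: replacing agent j's mixed strategy by the point mass at k is the same as
   playing the original profile and then overwriting j's realized action by k. *)
Lemma sum_prodw_upd_pure w j k (f : profile J K -> R) :
  \sum_k' w j k' = 1 ->
  \sum_a prodw w a * f (upd_pure a j k) = \sum_a prodw (upd_mixed w j (dirac k)) a * f a.
Proof.
move=> hwj; pose P a := \prod_(i | i != j) w i (a i).
pose S := \sum_(b : profile J K | b j == k) P b * f b.
have -> : \sum_a prodw (upd_mixed w j (dirac k)) a * f a = S.
  rewrite /S [RHS]big_mkcond; apply: eq_bigr => a _; rewrite prodw_upd_dirac.
  by case: eqP => _; rewrite ?mul1r ?mul0r.
rewrite (partition_big (fun a : profile J K => a j) xpredT) //=.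
rewrite -[S]mul1r -hwj big_distrl /=; apply: eq_bigr => k' _.
rewrite /S -(sum_fiber_upd_pure (fun b => P b * f b) j k k') big_distrr /=.
apply: eq_big => // a /eqP ak'.
by rewrite /prodw (bigD1 j) //= ak' /P prod_neq_upd_pure mulrA.
Qed.

End ProductDistribution.

Arguments dirac {R K} k.

Section ExpectedCosts.
Variables (R : realType) (J K d : nat) (phi : 'I_J -> profile J K -> 'rV[R]_d).
Implicit Types (w : 'I_J -> 'I_K -> R) (z : 'rV[R]_d) (a : profile J K) (k : 'I_K).

Lemma dotpC (u v : 'rV[R]_d) : dotp u v = dotp v u.
Proof. by apply: eq_bigr => i _; rewrite mulrC. Qed.

Lemma exp_cost_upd_dirac w j k z :
  \sum_k' w j k' = 1 ->
  exp_cost phi j (upd_mixed w j (dirac k)) z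
  = \sum_a prodw w a * dotp (phi j (upd_pure a j k)) z.
Proof. by move=> hwj; rewrite (sum_prodw_upd_pure k (fun a => dotp (phi j a) z) hwj). Qed.

Lemma exp_cost_ge w j z (lb : R) :
  (forall i, in_simplex (w i)) -> (forall a, lb <= dotp (phi j a) z) ->
  lb <= exp_cost phi j w z.
Proof. exact: sum_prodw_ge. Qed.

Lemma social_costE w z :
  social_cost phi w z = \sum_a prodw w a * \sum_j dotp (phi j a) z.
Proof.
rewrite /social_cost exchange_big /=; apply: eq_bigr => a _.
by rewrite mulr_sumr.
Qed.

Lemma smooth_deviation_cost (m : nat) (zv : 'I_m -> 'rV[R]_d) (delta mu : R) w
    (astar : profile J K) (c : 'I_m) :
  ctx_smooth zv phi delta mu -> (forall i, in_simplex (w i)) ->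
  \sum_j exp_cost phi j (upd_mixed w j (dirac (astar j))) (zv c)
  <= delta * \sum_j dotp (phi j astar) (zv c) + mu * social_cost phi w (zv c).
Proof.
move=> hs hw; have hw1 j : \sum_k w j k = 1 by case: (hw j).
under eq_bigr => j _ do rewrite (exp_cost_upd_dirac (astar j) (zv c) (hw1 j)).
rewrite exchange_big /= social_costE mulr_sumr -[delta * _]mul1r -(sum_prodw hw).
rewrite big_distrl -big_split /=; apply: ler_sum => a _.
rewrite -mulr_sumr [mu * _]mulrCA -mulrDr ler_wpM2l ?prodw_ge0 //.
by rewrite mulr_sumr mulr_sumr -big_split; apply: hs.
Qed.

End ExpectedCosts.

Section Regret.
Variables (R : realType) (J K d m T : nat).
Variables (zv : 'I_m -> 'rV[R]_d) (zt : 'I_T -> 'I_m).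
Variables (phi : 'I_J -> profile J K -> 'rV[R]_d) (w : 'I_T -> 'I_J -> 'I_K -> R).
Hypothesis cost_ge : forall j a c, -1 <= dotp (phi j a) (zv c).
Hypothesis w_simplex : forall t j, in_simplex (w t j).

Lemma contextual_regret_ge j (pi : 'I_m -> 'I_K -> R) :
  (forall c, in_simplex (pi c)) ->
  \sum_t exp_cost phi j (w t) (zv (zt t))
    - \sum_t exp_cost phi j (upd_mixed (w t) j (pi (zt t))) (zv (zt t))
  <= contextual_regret zv zt phi w j.
Proof.
move=> hpi; rewrite lerD2l lerN2; apply: ge_inf; last by exists pi.
exists (- T%:R) => _ [p [hp ->]].
rewrite -[T in - T%:R]card_ord -sumr_const -sumrN; apply: ler_sum => t _.
by apply: exp_cost_ge => [|a]; [exact: in_simplex_upd_mixed | exact: cost_ge].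
Qed.

Lemma regret_smoothness_bound (delta mu : R) (rho : 'I_m -> profile J K) :
  ctx_smooth zv phi delta mu ->
  (1 - mu) * \sum_t social_cost phi (w t) (zv (zt t)) - \sum_j contextual_regret zv zt phi w j
  <= delta * \sum_t \sum_j dotp (phi j (rho (zt t))) (zv (zt t)).
Proof.
move=> hs; pose pi j c : 'I_K -> R := dirac (rho c j).
have hreg : \sum_j (\sum_t exp_cost phi j (w t) (zv (zt t))
    - \sum_t exp_cost phi j (upd_mixed (w t) j (pi j (zt t))) (zv (zt t)))
    <= \sum_j contextual_regret zv zt phi w j.
  by apply: ler_sum => j _; apply: contextual_regret_ge => c; apply: in_simplex_dirac.
have hdev : \sum_t \sum_j exp_cost phi j (upd_mixed (w t) j (pi j (zt t))) (zv (zt t))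
    <= delta * \sum_t \sum_j dotp (phi j (rho (zt t))) (zv (zt t))
       + mu * \sum_t social_cost phi (w t) (zv (zt t)).
  rewrite !mulr_sumr -big_split /=; apply: ler_sum => t _.
  exact: smooth_deviation_cost.
rewrite sumrB [X in X - _]exchange_big [X in _ - X]exchange_big /= in hreg.
move: hreg hdev; rewrite /social_cost -[\sum_t \sum_j _]exchange_big /=; lra.
Qed.

End Regret.

Theorem proposition4 (R : realType) (J K d m T : nat)
  (zv : 'I_m -> 'rV[R]_d) (zt : 'I_T -> 'I_m)
  (phi : 'I_J -> profile J K -> 'rV[R]_d) (delta mu : R)
  (w : 'I_T -> 'I_J -> 'I_K -> R) :
  (0 < J)%N -> (0 < T)%N ->
  injective zv ->
  (forall (j : 'I_J) (a : profile J K) (c : 'I_m),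
      `|dotp (zv c) (phi j a)| <= 1) ->
  0 < delta -> 0 < mu -> mu < 1 ->
  ctx_smooth zv phi delta mu ->
  (forall t j, in_simplex (w t j)) ->
  T%:R^-1 * \sum_(t < T) social_cost phi (w t) (zv (zt t))
  <= delta / (1 - mu) * opt_cost zv zt phi
     + ((1 - mu) * T%:R)^-1 * \sum_(j < J) contextual_regret zv zt phi w j.
Proof.
move=> J_gt0 T_gt0 _ cost_bounded delta_gt0 _ mu_lt1 hs hw.
have cost_ge j a c : -1 <= dotp (phi j a) (zv c).
  by have := cost_bounded j a c; rewrite dotpC ler_norml => /andP[].
have K_gt0 := in_simplex_gt0 (hw (Ordinal T_gt0) (Ordinal J_gt0)).
set A := \sum_t _; set Reg := \sum_j _.
have T_pos : 0 < T%:R :> R by rewrite ltr0n.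
have mu_pos : 0 < 1 - mu by rewrite subr_gt0.
have opt_ge : ((1 - mu) * A - Reg) / (delta * T%:R) <= opt_cost zv zt phi.
  apply: lb_le_inf; first by eexists; exists (fun _ => [ffun=> Ordinal K_gt0]).
  move=> _ [rho ->]; rewrite ler_pdivrMr ?mulr_gt0 //.
  rewrite [leRHS]mulrAC [T%:R^-1 * _]mulrCA mulVf ?lt0r_neq0 // mulr1.
  exact: regret_smoothness_bound.
have -> : T%:R^-1 * A
    = delta / (1 - mu) * (((1 - mu) * A - Reg) / (delta * T%:R)) + ((1 - mu) * T%:R)^-1 * Reg.
  by field; rewrite (lt0r_neq0 T_pos) (lt0r_neq0 mu_pos) (lt0r_neq0 delta_gt0).
by rewrite lerD2r ler_wpM2l // divr_ge0 ?ltW.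
Qed.
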